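(* Let $\mathcal{A}=(\mathcal{H},|s_0\rangle,\Sigma,\{U_\sigma\}_{\sigma\in\Sigma},F)$ be a quantum automaton. For any nonempty finite word $w\in\Sigma^+$ and any $\varepsilon>0$, there is a positive integer $k$ such that $$\bigl|f^{\mathrm{ND}}_{\mathcal{A}}(uv)-f^{\mathrm{ND}}_{\mathcal{A}}(uw^kv)\bigr|\le\varepsilon$$ for all finite words $u\in\Sigma^*$ and all infinite words $v\in\Sigma^\omega$. Moreover, if $\mathcal{H}$ is $n$-dimensional, there is a constant $c$ such that such a $k$ can be chosen with $k\le (c\varepsilon)^{-n}$.
   Context: A quantum automaton is a tuple $\mathcal{A}=(\mathcal{H},|s_0\rangle,\Sigma,\{U_\sigma:\sigma\in\Sigma\},F)$ where $\mathcal{H}$ is a finite-dimensional complex Hilbert space, $|s_0\rangle\in\mathcal{H}$ is a unit vector (initial state), $\Sigma$ is a finite alphabet, each $U_\sigma$ is a unitary operator on $\mathcal{H}$, and $F$ is a subspace of $\mathcal{H}$ (accepting space). For a finite word $x=\sigma_1\cdots\sigma_m$ put $U_x=U_{\sigma_m}\cdots U_{\sigma_1}$ ($U_\epsilon=I$). For an infinite word $w=\sigma_1\sigma_2\cdots\in\Sigma^\omega$, let $w_n$ denote its prefix of length $n$; the non-disturbing run of $\mathcal{A}$ over $w$ is $|s_n\rangle=U_{w_n}|s_0\rangle$, $n\ge0$. The non-disturbing Büchi acceptance probability is $$f^{\mathrm{ND}}_{\mathcal{A}}(w)=\sup_{|\psi\rangle\in F,\ \||\psi\rangle\|=1}\ \sup_{\{n_i\}}\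 \inf_{i\ge1}|\langle\psi|s_{n_i}\rangle|^2,$$ where $\{n_i\}$ ranges over all strictly increasing sequences $0\le n_1<n_2<\cdots$ of natural numbers. $w^k$ denotes the $k$-fold concatenation of $w$. *)

From HB Require Import structures.
From mathcomp Require Import all_boot all_order all_algebra.
From mathcomp Require Import complex.
From mathcomp Require Import boolp classical_sets reals.
Set Implicit Arguments. Unset Strict Implicit. Unset Printing Implicit Defensive.
Import Order.TTheory GRing.Theory Num.Theory.
Local Open Scope ring_scope.
Local Open Scope classical_set_scope.

Section QA.
Variable R : realType.
Local Notation C := R[i].

Definition inner n (x y : 'cV[C]_n) : C := \sum_(i < n) ((x i 0)^*)%C * y i 0.

Definition sqmod (z : C) : R := let: Complex a b := z in a ^+ 2 + b ^+ 2.

Definition unit_vector n (x : 'cV[C]_n) : Prop := inner x x = 1.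

Definition adjoint n (U : 'M[C]_n) : 'M[C]_n := (map_mx (fun z => (z^*)%C) U)^T.

Definition unitary n (U : 'M[C]_n) : Prop := adjoint U *m U = 1%:M /\ U *m adjoint U = 1%:M.

(* The accepting space is the subspace spanned by the rows of F, viewed as
   (transposed) column vectors: x is in it iff (x^T <= F)%MS. *)
Definition in_space n (F : 'M[C]_n) (x : 'cV[C]_n) : bool := (x^T <= F)%MS.

Variable Sigma : finType.

(* U_x = U_{s_m} ... U_{s_1} for x = s_1 ... s_m ; U_eps = I *)
Definition Uword n (U : Sigma -> 'M[C]_n) (x : seq Sigma) : 'M[C]_n :=
  foldl (fun M s => U s *m M) 1%:M x.

Definition oword := nat -> Sigma.

Definition prefix (w : oword) (m : nat) : seq Sigma := mkseq w m.

Definition catw (x : seq Sigma) (v : oword) : oword :=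
  fun i => if (i < size x)%N then nth (v 0%N) x i else v (i - size x)%N.

Definition wpow (w : seq Sigma) (k : nat) : seq Sigma := flatten (nseq k w).

Definition run n (s0 : 'cV[C]_n) (U : Sigma -> 'M[C]_n) (w : oword) (m : nat) : 'cV[C]_n :=
  Uword U (prefix w m) *m s0.

Definition fND n (s0 : 'cV[C]_n) (U : Sigma -> 'M[C]_n) (F : 'M[C]_n) (w : oword) : R :=
  sup [set r : R | exists psi : 'cV[C]_n, in_space F psi /\ unit_vector psi /\
        exists ns : nat -> nat, (forall i, (ns i < ns i.+1)%N) /\
        r = inf [set y : R | exists i : nat, y = sqmod (inner psi (run s0 U w (ns i)))]].

End QA.

From Pilot Require Import Defs.
From HB Require Import structures.
From mathcomp Require Import all_boot all_order all_algebra.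
From mathcomp Require Import complex.
From mathcomp Require Import reals.
From mathcomp Require Import classical_sets boolp.
From mathcomp Require Import spectral sesquilinear.
From mathcomp Require Import ring lra zify.
Import Order.TTheory GRing.Theory Num.Theory archimedean.Num.Theory archimedean.Num.Def.
Local Open Scope ring_scope.
Set Implicit Arguments. Unset Strict Implicit. Unset Printing Implicit Defensive.

(* Diagonalise U_w = P^* diag(d) P with |d_j| = 1.  Keying each point of the
   unit circle by its octant and by its smaller coordinate at precision h, the
   pigeonhole principle applied to the n-tuples (d_j^m)_j for
   m <= (8 (1/h + 1))^n yields k > 0 with |d_j^k - 1| = O(h) for all j, hence
   U_w^k = I + O(h).  Inserting w^k after u then perturbs every later state of
   the run by O(h), so each overlap |<psi|s_m>|^2 moves by O(h) uniformly in m;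
   shifting the subsequences (n_i) by |w^k| turns every value of the inner
   infimum for one word into a value at most O(h) smaller for the other, and
   the two suprema differ by O(h). *)

Section L1Norm.
Variable R : rcfType.
Local Notation C := R[i].

(* The l1 norm of C, equivalent to the modulus but free of square roots. *)
Definition cnorm1 (z : C) : R := let: Complex a b := z in `|a| + `|b|.

Lemma cnorm1_ge0 z : 0 <= cnorm1 z.
Proof. by case: z => a b /=; rewrite addr_ge0. Qed.

Lemma cnorm10 : cnorm1 0 = 0.
Proof. by rewrite /= normr0 addr0. Qed.

Lemma cnorm1D x y : cnorm1 (x + y) <= cnorm1 x + cnorm1 y.
Proof.
case: x => a b; case: y => c d /=.
have := ler_normD a c; have := ler_normD b d; lra.
Qed.

Lemma cnorm1N x : cnorm1 (- x) = cnorm1 x.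
Proof. by case: x => a b /=; rewrite !normrN. Qed.

Lemma cnorm1J x : cnorm1 x^*%C = cnorm1 x.
Proof. by case: x => a b /=; rewrite normrN. Qed.

Lemma cnorm1M x y : cnorm1 (x * y) <= cnorm1 x * cnorm1 y.
Proof.
case: x => a b; case: y => c d /=.
have := ler_normB (a * c) (b * d); have := ler_normD (a * d) (b * c).
rewrite !normrM; lra.
Qed.

Lemma cnorm1_sum (I : Type) (r : seq I) (P : pred I) (F : I -> C) :
  cnorm1 (\sum_(i <- r | P i) F i) <= \sum_(i <- r | P i) cnorm1 (F i).
Proof.
elim/big_rec2: _ => [|i y1 y2 _ IH]; first by rewrite cnorm10.
by apply: le_trans (cnorm1D _ _) _; rewrite lerD2l.
Qed.

Definition mxnorm1 m p (A : 'M[C]_(m, p)) : R := \sum_i \sum_j cnorm1 (A i j).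

Lemma mxnorm1_ge0 m p (A : 'M[C]_(m, p)) : 0 <= mxnorm1 A.
Proof. by do 2![apply: sumr_ge0 => ? _]; apply: cnorm1_ge0. Qed.

Lemma mxnorm1M m p q (A : 'M[C]_(m, p)) (B : 'M[C]_(p, q)) :
  mxnorm1 (A *m B) <= mxnorm1 A * mxnorm1 B.
Proof.
rewrite /mxnorm1 mulr_suml; apply: ler_sum => i _.
apply: (@le_trans _ _ (\sum_j \sum_l cnorm1 (A i l) * cnorm1 (B l j))).
  apply: ler_sum => j _; rewrite mxE; apply: le_trans (cnorm1_sum _ _ _) _.
  by apply: ler_sum => l _; apply: cnorm1M.
rewrite exchange_big mulr_suml /=; apply: ler_sum => l _.
rewrite -mulr_sumr ler_wpM2l ?cnorm1_ge0 //.
rewrite (bigD1 l) //= lerDl.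
by do 2![apply: sumr_ge0 => ? _]; apply: cnorm1_ge0.
Qed.

Lemma mxnorm1_le m p (A : 'M[C]_(m, p)) b :
  (forall i j, cnorm1 (A i j) <= b) -> mxnorm1 A <= (m * p)%:R * b.
Proof.
move=> Ab; apply: (@le_trans _ _ (\sum_(i < m) \sum_(j < p) b)).
  by do 2![apply: ler_sum => ? _]; apply: Ab.
by rewrite sumr_const card_ord sumr_const card_ord -mulrnA mulr_natl mulnC.
Qed.

End L1Norm.

Section SquaredModulus.
Variable R : realType.
Local Notation C := R[i].

Lemma sqmod_ge0 (z : C) : 0 <= sqmod z.
Proof. by case: z => a b /=; rewrite addr_ge0 // sqr_ge0. Qed.

Lemma sqmod_le_cnorm1 (z : C) : sqmod z <= cnorm1 z ^+ 2.
Proof.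
case: z => a b /=; rewrite -(real_normK (num_real a)) -(real_normK (num_real b)).
have := normr_ge0 a; have := normr_ge0 b; nra.
Qed.

Lemma cnorm1_le2 (z : C) : sqmod z <= 1 -> cnorm1 z <= 2.
Proof.
case: z => a b /=; rewrite -(real_normK (num_real a)) -(real_normK (num_real b)).
have := normr_ge0 a; have := normr_ge0 b; have := sqr_ge0 (`|a| - `|b|); nra.
Qed.

Lemma sqmodB_le (x y : C) :
  `|sqmod x - sqmod y| <= cnorm1 (x - y) * (cnorm1 x + cnorm1 y).
Proof.
case: x => a b; case: y => c d /=.
have -> : a ^+ 2 + b ^+ 2 - (c ^+ 2 + d ^+ 2) = (a - c) * (a + c) + (b - d) * (b + d)
  by ring.
apply: le_trans (ler_normD _ _) _; rewrite !normrM.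
have := ler_normD a c; have := ler_normD b d.
have := normr_ge0 (a - c); have := normr_ge0 (b - d).
have := normr_ge0 (a + c); have := normr_ge0 (b + d).
nra.
Qed.

Lemma mulJc_sqmod (z : C) : z^*%C * z = (sqmod z)%:C%C.
Proof. by case: z => a b; simpc; rewrite /= -!expr2; congr Complex; ring. Qed.

Lemma sqmodM (x y : C) : sqmod (x * y) = sqmod x * sqmod y.
Proof. by case: x => a b; case: y => c d /=; ring. Qed.

Lemma sqmodX (z : C) m : sqmod (z ^+ m) = sqmod z ^+ m.
Proof.
elim: m => [|m IH]; first by rewrite !expr0 /= expr0n /= addr0 expr1n.
by rewrite !exprS sqmodM IH.
Qed.

Lemma sqmod_le1_of_sum n (f : 'I_n -> C) :
  \sum_i (f i)^*%C * f i = 1 -> forall i, sqmod (f i) <= 1.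
Proof.
move=> f1 i; have sum_sqmod : \sum_i sqmod (f i) = 1.
  apply: (@complexI R); rewrite rmorph_sum rmorph1 -f1.
  by apply: eq_bigr => j _; rewrite mulJc_sqmod.
rewrite -sum_sqmod (bigD1 i) //= lerDl; apply: sumr_ge0 => j _; exact: sqmod_ge0.
Qed.

End SquaredModulus.

Section Unitary.
Variable R : realType.
Local Notation C := R[i].

Lemma cnorm1_inner_le n (psi y : 'cV[C]_n) b :
  (forall i, cnorm1 (psi i 0) <= b) -> cnorm1 (inner psi y) <= b * mxnorm1 y.
Proof.
move=> psib; apply: le_trans (cnorm1_sum _ _ _) _.
rewrite /mxnorm1 mulr_sumr; apply: ler_sum => i _; rewrite big_ord1.
by apply: le_trans (cnorm1M _ _) _; rewrite cnorm1J ler_wpM2r ?cnorm1_ge0.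
Qed.

Lemma innerBr n (psi x y : 'cV[C]_n) : inner psi x - inner psi y = inner psi (x - y).
Proof. by rewrite /inner -sumrB; apply: eq_bigr => i _; rewrite !mxE mulrBr. Qed.

Lemma adjointE n (U : 'M[C]_n) i j : adjoint U i j = (U j i)^*%C.
Proof. by rewrite !mxE. Qed.

Lemma adjointK n : involutive (@adjoint R n).
Proof. by move=> U; apply/matrixP => i j; rewrite !adjointE conjcK. Qed.

Lemma adjointM n (A B : 'M[C]_n) : adjoint (A *m B) = adjoint B *m adjoint A.
Proof.
apply/matrixP => i j; rewrite adjointE !mxE rmorph_sum /=.
by apply: eq_bigr => l _; rewrite !adjointE rmorphM mulrC.
Qed.

Lemma adjoint1 n : adjoint (1%:M : 'M[C]_n) = 1%:M.
Proof. by apply/matrixP => i j; rewrite adjointE !mxE conjc_nat eq_sym. Qed.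

Lemma unitary1 n : unitary (1%:M : 'M[C]_n).
Proof. by rewrite /unitary adjoint1 mulmx1. Qed.

Lemma unitaryM n (A B : 'M[C]_n) : unitary A -> unitary B -> unitary (A *m B).
Proof.
move=> [A'A AA'] [B'B BB']; rewrite /unitary adjointM; split.
  by rewrite mulmxA -(mulmxA (adjoint B)) A'A mulmx1 B'B.
by rewrite mulmxA -(mulmxA A) BB' mulmx1 AA'.
Qed.

Lemma unitary_adjoint n (A : 'M[C]_n) : unitary A -> unitary (adjoint A).
Proof. by rewrite /unitary adjointK => -[]. Qed.

Lemma inner_unitary n (A : 'M[C]_n) x y :
  unitary A -> inner (A *m x) (A *m y) = inner x y.
Proof.
move=> [A'A _].
have innerE (u v : 'cV[C]_n) : inner u v = ((map_mx conjc u)^T *m v) 0 0.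
  by rewrite mxE; apply: eq_bigr => i _; rewrite !mxE.
rewrite !innerE map_mxM trmx_mul mulmxA -(mulmxA _ _ A).
by rewrite [_^T *m A]A'A mulmx1.
Qed.

Lemma unit_vector_unitary n (A : 'M[C]_n) x :
  unitary A -> unit_vector x -> unit_vector (A *m x).
Proof. by move=> uA ux; rewrite /unit_vector inner_unitary. Qed.

Lemma unit_vector_entry n (x : 'cV[C]_n) i : unit_vector x -> cnorm1 (x i 0) <= 2.
Proof. by move=> ux; apply/cnorm1_le2/(sqmod_le1_of_sum (f := x^~ 0)). Qed.

Lemma unitary_entry n (A : 'M[C]_n) i j : unitary A -> cnorm1 (A i j) <= 2.
Proof.
move=> [A'A _]; apply/cnorm1_le2/(sqmod_le1_of_sum (f := A^~ j)).
have := congr1 (fun M : 'M[C]_n => M j j) A'A; rewrite !mxE eqxx mulr1n => <-.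
by apply: eq_bigr => l _; rewrite adjointE.
Qed.

Lemma mxnorm1_unit_vector n (x : 'cV[C]_n) : unit_vector x -> mxnorm1 x <= 2 * n%:R.
Proof.
move=> ux; rewrite mulrC -[n in n%:R]muln1.
by apply: mxnorm1_le => i j; rewrite ord1 unit_vector_entry.
Qed.

Lemma mxnorm1_unitary n (A : 'M[C]_n) : unitary A -> mxnorm1 A <= 2 * n%:R ^+ 2.
Proof.
by move=> uA; rewrite mulrC -natrX; apply: mxnorm1_le => i j; apply: unitary_entry.
Qed.

Lemma cnorm1_inner_unit n (psi x : 'cV[C]_n) :
  unit_vector psi -> unit_vector x -> cnorm1 (inner psi x) <= 4 * n%:R.
Proof.
move=> upsi ux; apply: le_trans (cnorm1_inner_le x (fun i => unit_vector_entry i upsi)) _.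
have -> : 4 * n%:R = 2 * (2 * n%:R) :> R by ring.
by rewrite ler_pM2l // mxnorm1_unit_vector.
Qed.

End Unitary.

(* 'M_n is a ring only when n is a successor, hence an explicit power. *)
Definition mxpow (K : nzRingType) n (W : 'M[K]_n) k := iter k (fun M => M *m W) 1%:M.

Section Words.
Variables (R : realType) (Sigma : finType) (n : nat) (U : Sigma -> 'M[R[i]]_n).

Lemma foldl_Uword (x : seq Sigma) (M : 'M_n) :
  foldl (fun M s => U s *m M) M x = Uword U x *m M.
Proof.
elim: x M => [|s x IH] M /=; first by rewrite mul1mx.
by rewrite IH [in RHS]/Uword /= IH mulmx1 mulmxA.
Qed.

Lemma Uword_cat (x y : seq Sigma) : Uword U (x ++ y) = Uword U y *m Uword U x.
Proof. by rewrite /Uword foldl_cat foldl_Uword. Qed.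

Lemma Uword_unitary x : (forall s, unitary (U s)) -> unitary (Uword U x).
Proof.
move=> uU; elim/last_ind: x => [|x s IH]; first exact: unitary1.
by rewrite -cats1 Uword_cat; apply: unitaryM => //; rewrite /Uword /= mulmx1.
Qed.

Lemma Uword_wpow w k : Uword U (wpow w k) = mxpow (Uword U w) k.
Proof. by elim: k => [|k IH] //=; rewrite -IH -Uword_cat. Qed.

Lemma prefix_catw (x : seq Sigma) (v : oword Sigma) m :
  Defs.prefix (catw x v) (size x + m) = x ++ Defs.prefix v m.
Proof.
rewrite /Defs.prefix /mkseq iotaD map_cat; congr (_ ++ _).
  rewrite -{3}(mkseq_nth (v 0%N) x) /mkseq; apply/eq_in_map => i.
  by rewrite mem_iota add0n /catw => /andP[_ ->].
rewrite [(0 + size x)%N]addnC iotaDl -map_comp; apply: eq_map => i /=.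
by rewrite /catw ltnNge leq_addr /= addKn.
Qed.

Lemma run_catw s0 (x : seq Sigma) (v : oword Sigma) m :
  run s0 U (catw x v) (size x + m) = Uword U (Defs.prefix v m) *m (Uword U x *m s0).
Proof. by rewrite /run prefix_catw Uword_cat mulmxA. Qed.

End Words.

Section SubsequenceInfima.
Variable R : realType.
Local Open Scope classical_set_scope.

Lemma sup_le_addr (A B : set R) D : has_ubound B -> A !=set0 ->
  (forall a, A a -> exists2 b, B b & a - D <= b) -> sup A <= sup B + D.
Proof.
move=> ubB neA AB; apply: ge_sup => // a /AB[b Bb le_ab].
by rewrite -lerBlDr (le_trans le_ab) // ub_le_sup.
Qed.

Lemma dist_sup_le (A B : set R) D : 0 <= D -> has_ubound A -> has_ubound B ->
  (forall a, A a -> exists2 b, B b & a - D <= b) ->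
  (forall b, B b -> exists2 a, A a & b - D <= a) -> `|sup A - sup B| <= D.
Proof.
move=> D0 ubA ubB AB BA.
have [[a Aa]|/nonemptyPn A0] := pselect (A !=set0).
  have neB : B !=set0 by have [b Bb _] := AB a Aa; exists b.
  have := sup_le_addr ubB (ex_intro _ a Aa) AB.
  have := sup_le_addr ubA neB BA.
  by rewrite ler_norml => ? ?; apply/andP; split; lra.
have B0 : B = set0 by apply/nonemptyPn => -[b /BA[a]]; rewrite A0.
by rewrite A0 B0 subrr normr0.
Qed.

Definition subinf (f : nat -> R) (ns : nat -> nat) : R :=
  inf [set y | exists i, y = f (ns i)].

Lemma subinf_le f ns i : (forall m, 0 <= f m) -> subinf f ns <= f (ns i).
Proof. by move=> f_ge0; apply: ge_inf; [exists 0 => _ [j ->] | exists i]. Qed.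

Lemma subinf_shift f1 f2 o1 o2 D : (forall m, 0 <= f1 m) ->
  (forall m, f1 (o1 + m)%N - D <= f2 (o2 + m)%N) ->
  forall ns, (forall i, ns i < ns i.+1)%N ->
  exists2 ns', (forall i, ns' i < ns' i.+1)%N & subinf f1 ns - D <= subinf f2 ns'.
Proof.
move=> f1_ge0 f12 ns ns_incr.
have ns_ge i : (i <= ns i)%N by elim: i => // i IH; apply: leq_ltn_trans IH _.
exists (fun i => o2 + (ns (i + o1) - o1))%N.
  move=> i; rewrite ltn_add2l.
  by have := ns_incr (i + o1)%N; have := ns_ge (i + o1)%N; rewrite addSn; lia.
apply: lb_le_inf => [|_ [i ->]]; first by eexists; exists 0%N.
apply: le_trans (f12 _); rewrite subnKC; last by have := ns_ge (i + o1)%N; lia.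
by rewrite lerD2r subinf_le.
Qed.

End SubsequenceInfima.

Section Dirichlet.
Variable R : realType.
Local Notation C := R[i].

Lemma distr_same_sign (a a' : R) : (a < 0) = (a' < 0) -> `|a - a'| = `| `|a| - `|a'| |.
Proof.
case: (ltrP a 0) => a0; case: (ltrP a' 0) => a'0 //= _.
  by rewrite (ltr0_norm a0) (ltr0_norm a'0) -opprD normrN.
by rewrite (ger0_norm a0) (ger0_norm a'0).
Qed.

Lemma arc_dist_le (t s t' s' : R) : 0 <= t -> 0 <= t' -> t <= s -> t' <= s' ->
  t ^+ 2 + s ^+ 2 = 1 -> t' ^+ 2 + s' ^+ 2 = 1 -> `|s - s'| <= `|t - t'|.
Proof.
move=> t0 t'0 ts t's' ts1 t's'1.
have ss'_gt0 : 0 < s + s' by nra.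
have e : `|s - s'| * (s + s') = `|t - t'| * (t + t').
  rewrite -[s + s']ger0_norm ?ltW // -[t + t']ger0_norm ?addr_ge0 // -!normrM.
  have -> : (s - s') * (s + s') = - ((t - t') * (t + t')) by nra.
  by rewrite normrN.
rewrite -(ler_pM2r ss'_gt0) e ler_wpM2l //; lra.
Qed.

Lemma circle_dist_le (a b a' b' h : R) :
  a ^+ 2 + b ^+ 2 = 1 -> a' ^+ 2 + b' ^+ 2 = 1 -> `|a| <= `|b| -> `|a'| <= `|b'| ->
  (a < 0) = (a' < 0) -> (b < 0) = (b' < 0) -> `| `|a| - `|a'| | < h ->
  `|a - a'| + `|b - b'| <= 2 * h.
Proof.
move=> ab1 a'b'1 ab a'b' sa sb aa'.
rewrite (distr_same_sign sa) (distr_same_sign sb).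
rewrite -(real_normK (num_real a)) -(real_normK (num_real b)) in ab1.
rewrite -(real_normK (num_real a')) -(real_normK (num_real b')) in a'b'1.
by have := arc_dist_le (normr_ge0 a) (normr_ge0 a') ab a'b' ab1 a'b'1; lra.
Qed.

Section Octants.
Variable h : R.
Hypothesis h_gt0 : 0 < h.
Let L := truncn h^-1.

Lemma truncn_div_le (x : R) : 0 <= x <= 1 -> (truncn (x / h) <= L)%N.
Proof.
move=> /andP[x0 x1]; apply: le_truncn.
by rewrite ler_pdivrMr // mulVf ?gt_eqF // ler_pMr ?invr_gt0.
Qed.

Lemma eq_truncn_div (x y : R) : 0 <= x -> 0 <= y ->
  truncn (x / h) = truncn (y / h) -> `|x - y| < h.
Proof.
move=> x0 y0 xy.
have /andP[xl xr] := truncn_itv (divr_ge0 x0 (ltW h_gt0)).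
have /andP[yl yr] := truncn_itv (divr_ge0 y0 (ltW h_gt0)).
rewrite xy -natr1 in xl xr; rewrite -natr1 in yr.
have : `|x / h - y / h| < 1 by rewrite ltr_norml; apply/andP; split; lra.
by rewrite -mulrBl normrM (gtr0_norm (x := h^-1)) ?invr_gt0 // ltr_pdivrMr // mul1r.
Qed.

(* On the unit circle the octant and the smaller coordinate determine the
   point, so precision h costs only 8 (L + 1) keys: this one-dimensional
   parametrisation is what gives the exponent n rather than 2 n. *)
Definition octant_key (z : C) : bool * bool * bool * 'I_L.+1 :=
  let: Complex a b := z in
  (`|a| <= `|b|, a < 0, b < 0, inord (truncn (Num.min `|a| `|b| / h))).

Lemma octant_key_close (z z' : C) : sqmod z = 1 -> sqmod z' = 1 ->
  octant_key z = octant_key z' -> cnorm1 (z - z') <= 2 * h.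
Proof.
case: z => a b; case: z' => a' b' /= ab1 a'b'1 [ab_eq sa sb key_eq].
have min_ge0 (x y : R) : 0 <= Num.min `|x| `|y| by rewrite le_min !normr_ge0.
have min_le1 (x y : R) : x ^+ 2 + y ^+ 2 = 1 -> Num.min `|x| `|y| <= 1.
  move=> xy1; rewrite ge_min -(ler_pXn2r (n := 2)) ?nnegrE //.
  by rewrite real_normK ?num_real // expr1n; have := sqr_ge0 y; lra.
move/(congr1 val): key_eq; rewrite /= !inordK ?ltnS ?truncn_div_le ?min_ge0 ?min_le1 //.
move/(eq_truncn_div (min_ge0 a b) (min_ge0 a' b')).
have [ab|ba] := leP `|a| `|b|.
  have a'b' : `|a'| <= `|b'| by rewrite -ab_eq.
  by rewrite (min_l a'b'); apply: circle_dist_le.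
have b'a' : `|b'| < `|a'| by rewrite ltNge -ab_eq -ltNge.
rewrite (min_r (ltW b'a')) => close; rewrite addrC.
by apply: (circle_dist_le _ _ (ltW ba) (ltW b'a') sb sa close); rewrite addrC.
Qed.

Lemma unit_powers_near1 n (d : 'I_n -> C) : (forall j, sqmod (d j) = 1) ->
  exists k, [/\ (0 < k)%N, (k <= (8 * L.+1) ^ n)%N &
    forall j, cnorm1 (d j ^+ k - 1) <= 4 * h].
Proof.
move=> d1.
pose N := #|{ffun 'I_n -> bool * bool * bool * 'I_L.+1}|.
have cardN : N = ((8 * L.+1) ^ n)%N by rewrite /N card_ffun !card_prod !card_bool !card_ord.
pose keys (m : 'I_N.+1) := [ffun j => octant_key (d j ^+ m)].
have /injectivePn[x [y xy eq_keys]] : ~~ injectiveb keys.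
  by apply/injectiveP => /leq_card; rewrite card_ord -/N ltnn.
wlog lt_xy : x y xy eq_keys / (x < y)%N.
  move=> W; case: (ltngtP x y) => [|/W|/val_inj xy0]; [exact: W | |].
    by apply; rewrite // eq_sym.
  by rewrite xy0 eqxx in xy.
exists (y - x)%N; split; first by rewrite subn_gt0.
  by rewrite -cardN (leq_trans (leq_subr _ _)) // -ltnS.
move=> j; have /ffunP/(_ j) := eq_keys; rewrite !ffunE.
set z := d j; have zX1 m : sqmod (z ^+ m) = 1 by rewrite sqmodX d1 expr1n.
move=> /(octant_key_close (zX1 x) (zX1 y)) close.
have -> : z ^+ (y - x) - 1 = (z ^+ x)^*%C * (z ^+ y - z ^+ x).
  have -> : z ^+ y = z ^+ x * z ^+ (y - x) by rewrite -exprD subnKC // ltnW.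
  by rewrite mulrBr mulrA mulJc_sqmod zX1 rmorph1 mul1r.
apply: le_trans (cnorm1M _ _) _; rewrite cnorm1J -opprB cnorm1N.
have : cnorm1 (z ^+ x) <= 2 by rewrite cnorm1_le2 ?zX1.
have := cnorm1_ge0 (z ^+ x - z ^+ y); nra.
Qed.

End Octants.
End Dirichlet.

Section UnitaryPowers.
Variable R : realType.
Local Notation C := R[i].
Local Open Scope sesquilinear_scope.

Lemma conjCE (x : C) : Num.conj x = x^*%C.
Proof.
case: x => a b; rewrite (_ : Complex a b = a%:C + 'i * b%:C)%C; last by simpc.
by rewrite conjC_rect ?complex_real //; simpc.
Qed.

Lemma trmxC_adjoint n (W : 'M[C]_n) : W ^t* = adjoint W.
Proof. by apply/matrixP => i j; rewrite adjointE !mxE conjCE. Qed.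

Lemma unitary_diag_entry n (d : 'rV[C]_n) j : unitary (diag_mx d) -> sqmod (d 0 j) = 1.
Proof.
move=> [D'D _]; have := congr1 (fun M : 'M[C]_n => M j j) D'D.
rewrite !mxE eqxx (bigD1 j) //= big1 ?addr0; last first.
  by move=> l /negbTE jl; rewrite adjointE !mxE jl mulr0n rmorph0 mul0r.
by rewrite adjointE !mxE eqxx !mulr1n mulJc_sqmod => /complexI.
Qed.

Lemma unitary_diagonalize n (W : 'M[C]_n) : unitary W ->
  exists P d, [/\ unitary P, W = adjoint P *m diag_mx d *m P &
    forall j, sqmod (d 0 j) = 1].
Proof.
move=> [W'W WW'].
have /orthomx_spectralP : W \is normalmx.
  by apply/normalmxP; rewrite trmxC_adjoint W'W WW'.
set P := spectralmx W; set d := spectral_diag W => EW.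
have Pu : P \is unitarymx := spectral_unitarymx W.
have uP : unitary P.
  split; last by rewrite -trmxC_adjoint; apply/unitarymxP.
  by have := mulmxKtV 1%:M Pu erefl; rewrite mul1mx trmxC_adjoint.
rewrite invmx_unitary // trmxC_adjoint in EW.
exists P, d; split=> // j; apply: unitary_diag_entry.
have -> : diag_mx d = P *m W *m adjoint P.
  by case: uP => P'P PP'; rewrite EW !mulmxA PP' mul1mx -mulmxA PP' mulmx1.
by apply: unitaryM; [apply: unitaryM | apply: unitary_adjoint].
Qed.

Lemma mxpow_diagonalize n (P : 'M[C]_n) d k : unitary P ->
  mxpow (adjoint P *m diag_mx d *m P) k = adjoint P *m diag_mx (\row_j d 0 j ^+ k) *m P.
Proof.
move=> [P'P PP']; elim: k => [|k IH].
  rewrite /mxpow /= (_ : \row_j _ = const_mx 1); last by apply/matrixP => i j; rewrite !mxE.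
  by rewrite diag_const_mx mulmx1 P'P.
rewrite /mxpow iterS -/(mxpow _ k) IH.
rewrite !mulmxA -[_ *m P *m adjoint P]mulmxA PP' mulmx1.
rewrite -[adjoint P *m _ *m diag_mx d]mulmxA mulmx_diag.
by congr (_ *m diag_mx _ *m _); apply/matrixP => i j; rewrite !mxE exprSr.
Qed.

Lemma unitary_power_near1 n (W : 'M[C]_n) h : unitary W -> 0 < h <= 1 ->
  exists k, [/\ (0 < k)%N, k%:R <= (h / 16) ^- n &
    mxnorm1 (mxpow W k - 1%:M) <= 16 * n%:R ^+ 6 * h].
Proof.
move=> uW /andP[h_gt0 h_le1]; have [P [d [uP -> d1]]] := unitary_diagonalize uW.
have [k [k_gt0 k_le dk]] := unit_powers_near1 h_gt0 d1.
exists k; split => //.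
  have h'_ge1 : 1 <= h^-1 by rewrite invf_ge1.
  have trunc_le : (truncn h^-1)%:R <= h^-1 by rewrite truncn_le invr_ge0 ltW.
  apply: (@le_trans _ _ ((8 * (truncn h^-1).+1)%:R ^+ n)); first by rewrite -natrX ler_nat.
  rewrite -exprVn invf_div lerXn2r ?nnegrE ?divr_ge0 ?(ltW h_gt0) //.
  by rewrite natrM -natr1; lra.
have -> : mxpow (adjoint P *m diag_mx d *m P) k - 1%:M =
    adjoint P *m diag_mx (\row_j (d 0 j ^+ k - 1)) *m P.
  have -> : diag_mx (\row_j (d 0 j ^+ k - 1)) = diag_mx (\row_j d 0 j ^+ k) - 1%:M.
    by apply/matrixP => i j; rewrite !mxE; case: eqP; rewrite ?mulr1n ?mulr0n ?subr0.
  by rewrite mxpow_diagonalize // mulmxBr mulmxBl mulmx1; case: uP => -> _.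
have diag_le : mxnorm1 (diag_mx (\row_j (d 0 j ^+ k - 1))) <= n%:R ^+ 2 * (4 * h).
  rewrite -natrX; apply: mxnorm1_le => i j; rewrite !mxE.
  have [->|_] := eqVneq i j; first by rewrite mulr1n dk.
  by rewrite mulr0n cnorm10 mulr_ge0 // ltW.
apply: le_trans (mxnorm1M _ _) _.
apply: le_trans (ler_wpM2r (mxnorm1_ge0 P) (mxnorm1M _ _)) _.
have -> : 16 * n%:R ^+ 6 * h = 2 * n%:R ^+ 2 * (n%:R ^+ 2 * (4 * h)) * (2 * n%:R ^+ 2)
  by ring.
apply: ler_pM; rewrite ?mulr_ge0 ?mxnorm1_ge0 ?mxnorm1_unitary //.
exact: ler_pM (mxnorm1_ge0 _) (mxnorm1_ge0 _) (mxnorm1_unitary (unitary_adjoint uP)) diag_le.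
Qed.

End UnitaryPowers.

Section Acceptance.
Variables (R : realType) (Sigma : finType) (n : nat).
Local Notation C := R[i].

Lemma sqmod_inner_perturb (psi s : 'cV[C]_n) (V W : 'M[C]_n) :
  unit_vector psi -> unit_vector s -> unitary V -> unitary W ->
  `|sqmod (inner psi (V *m s)) - sqmod (inner psi (V *m (W *m s)))|
    <= 64 * n%:R ^+ 4 * mxnorm1 (W - 1%:M).
Proof.
move=> upsi us uV uW.
have uVs := unit_vector_unitary uV us.
have uVWs := unit_vector_unitary uV (unit_vector_unitary uW us).
rewrite distrC; apply: le_trans (sqmodB_le _ _) _; rewrite innerBr.
have -> : V *m (W *m s) - V *m s = V *m ((W - 1%:M) *m s).
  by rewrite -mulmxBr mulmxBl mul1mx.
have -> : 64 * n%:R ^+ 4 * mxnorm1 (W - 1%:M) =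
    2 * (2 * n%:R ^+ 2 * (mxnorm1 (W - 1%:M) * (2 * n%:R))) * (4 * n%:R + 4 * n%:R)
  by ring.
apply: ler_pM; rewrite ?cnorm1_ge0 ?addr_ge0 ?cnorm1_ge0 //; last first.
  by rewrite lerD ?cnorm1_inner_unit.
apply: le_trans (cnorm1_inner_le (V *m ((W - 1%:M) *m s)) (fun i => unit_vector_entry i upsi)) _.
rewrite ler_pM2l //; apply: le_trans (mxnorm1M _ _) _.
apply: ler_pM; rewrite ?mxnorm1_ge0 ?mxnorm1_unitary //.
apply: le_trans (mxnorm1M _ _) _.
by rewrite ler_wpM2l ?mxnorm1_ge0 ?mxnorm1_unit_vector.
Qed.

Variables (s0 : 'cV[C]_n) (U : Sigma -> 'M[C]_n) (F : 'M[C]_n).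
Hypotheses (us0 : unit_vector s0) (uU : forall s, unitary (U s)).

Let uUword x : unitary (Uword U x) := Uword_unitary x uU.
Let unit_Uword_s0 x : unit_vector (Uword U x *m s0) := unit_vector_unitary (uUword x) us0.
Local Open Scope classical_set_scope.

Definition overlap (psi : 'cV[C]_n) (w : oword Sigma) (m : nat) : R :=
  sqmod (inner psi (run s0 U w m)).

Definition accept_values (w : oword Sigma) : set R :=
  [set r | exists psi, in_space F psi /\ unit_vector psi /\
     exists ns : nat -> nat, (forall i, ns i < ns i.+1)%N /\ r = subinf (overlap psi w) ns].

Lemma fNDE w : fND s0 U F w = sup (accept_values w).
Proof. by []. Qed.

Lemma accept_values_ubound w : has_ubound (accept_values w).
Proof.
exists ((4 * n%:R) ^+ 2) => _ [psi [_ [upsi [ns [_ ->]]]]].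
apply: le_trans (subinf_le ns 0 (fun m => sqmod_ge0 _)) _.
apply: le_trans (sqmod_le_cnorm1 _) _.
rewrite lerXn2r ?nnegrE ?cnorm1_ge0 ?mulr_ge0 //.
exact: cnorm1_inner_unit upsi (unit_Uword_s0 _).
Qed.

Lemma accept_values_shift w1 w2 o1 o2 D :
  (forall psi, unit_vector psi -> forall m,
     overlap psi w1 (o1 + m) - D <= overlap psi w2 (o2 + m)) ->
  forall r, accept_values w1 r -> exists2 r', accept_values w2 r' & r - D <= r'.
Proof.
move=> w12 _ [psi [Fpsi [upsi [ns [ns_incr ->]]]]].
have [m|ns' ns'_incr le_inf] := subinf_shift _ (w12 psi upsi) ns_incr.
  exact: sqmod_ge0.
by eexists; first by exists psi; do !split => //; exists ns'.
Qed.

Lemma fND_insert_close (x u : seq Sigma) (v : oword Sigma) :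
  `|fND s0 U F (catw u v) - fND s0 U F (catw (u ++ x) v)|
    <= 64 * n%:R ^+ 4 * mxnorm1 (Uword U x - 1%:M).
Proof.
have close psi m : unit_vector psi ->
  `|overlap psi (catw u v) (size u + m) - overlap psi (catw (u ++ x) v) (size (u ++ x) + m)|
  <= 64 * n%:R ^+ 4 * mxnorm1 (Uword U x - 1%:M).
  move=> upsi; rewrite /overlap !run_catw Uword_cat -mulmxA.
  exact: sqmod_inner_perturb upsi (unit_Uword_s0 u) (uUword _) (uUword x).
rewrite !fNDE; apply: dist_sup_le; rewrite ?mulr_ge0 ?mxnorm1_ge0 //;
  try exact: accept_values_ubound.
  apply: accept_values_shift => psi upsi m.
  by have := close psi m upsi; rewrite ler_norml => /andP[]; lra.
apply: accept_values_shift => psi upsi m.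
by have := close psi m upsi; rewrite ler_norml => /andP[]; lra.
Qed.

End Acceptance.

Lemma fND_pumping (R : realType) n : exists c : R, 0 < c /\
  forall (Sigma : finType) (s0 : 'cV[R[i]]_n) (U : Sigma -> 'M[R[i]]_n) (F : 'M[R[i]]_n),
  unit_vector s0 -> (forall s, unitary (U s)) ->
  forall (w : seq Sigma) (eps : R), 0 < eps -> eps <= 1 ->
  exists k : nat, [/\ (0 < k)%N, k%:R <= (c * eps) ^- n &
    forall (u : seq Sigma) (v : oword Sigma),
      `|fND s0 U F (catw u v) - fND s0 U F (catw (u ++ wpow w k) v)| <= eps].
Proof.
(* The constants of fND_insert_close and unitary_power_near1, plus one. *)
pose K : R := 64 * n%:R ^+ 4 * (16 * n%:R ^+ 6) + 1.
have K_ge1 : 1 <= K by rewrite /K lerDr !mulr_ge0 ?exprn_ge0.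
have K_gt0 : 0 < K := lt_le_trans ltr01 K_ge1.
exists (16 * K)^-1; split=> [|Sigma s0 U F us0 uU w eps eps_gt0 eps_le1].
  by rewrite invr_gt0 mulr_gt0.
have h_itv : 0 < eps / K <= 1.
  by rewrite divr_gt0 //= ler_pdivrMr // mul1r (le_trans eps_le1).
have [k [k_gt0 k_le Wk]] := unitary_power_near1 (Uword_unitary w uU) h_itv.
exists k; split=> // [|u v].
  by rewrite (_ : _ * eps = eps / K / 16) // invfM; ring.
apply: le_trans (fND_insert_close F us0 uU (wpow w k) u v) _; rewrite Uword_wpow.
apply: le_trans (ler_wpM2l _ Wk) _; first by rewrite mulr_ge0 ?exprn_ge0.
rewrite mulrA mulrA ler_pdivrMr //.
by rewrite [X in _ <= X]mulrC ler_pM2r // /K lerDl.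
Qed.

Theorem theorem1 (R : realType) :
  (* main statement *)
  (forall (n : nat) (Sigma : finType) (s0 : 'cV[R[i]]_n)
          (U : Sigma -> 'M[R[i]]_n) (F : 'M[R[i]]_n),
     unit_vector s0 -> (forall s, unitary (U s)) ->
     forall (w : seq Sigma) (eps : R), w != [::] -> 0 < eps ->
     exists k : nat, (0 < k)%N /\
       forall (u : seq Sigma) (v : oword Sigma),
         `| fND s0 U F (catw u v) - fND s0 U F (catw (u ++ wpow w k) v) | <= eps)
  /\
  (* quantitative bound: for dimension n, k <= (c eps)^(-n) *)
  (forall n : nat, exists c : R, 0 < c /\
     forall (Sigma : finType) (s0 : 'cV[R[i]]_n)
            (U : Sigma -> 'M[R[i]]_n) (F : 'M[R[i]]_n),
     unit_vector s0 -> (forall s, unitary (U s)) ->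
     forall (w : seq Sigma) (eps : R), w != [::] -> 0 < eps -> eps <= 1 ->
     exists k : nat, (0 < k)%N /\ (k%:R <= (c * eps) ^- n) /\
       forall (u : seq Sigma) (v : oword Sigma),
         `| fND s0 U F (catw u v) - fND s0 U F (catw (u ++ wpow w k) v) | <= eps).
Proof.
split=> [n Sigma s0 U F us0 uU w eps _ eps_gt0 | n].
  have [c [_ pump]] := fND_pumping R n.
  have [||k [k_gt0 _ close]] := pump Sigma s0 U F us0 uU w (Num.min eps 1).
  - by rewrite lt_min eps_gt0 ltr01.
  - by rewrite ge_min lexx orbT.
  by exists k; split=> // u v; rewrite (le_trans (close u v)) // ge_min lexx.
have [c [c_gt0 pump]] := fND_pumping R n.
exists c; split=> // Sigma s0 U F us0 uU w eps _ eps_gt0 eps_le1.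
by have [k [k_gt0 k_le close]] := pump Sigma s0 U F us0 uU w eps eps_gt0 eps_le1; exists k.
Qed.
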